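(* Let $\mathbb{F}$ be a field and $p$ a prime. Let $G$ be an irreducible subgroup of $\widetilde{\mathrm{M}}(p,\mathbb{F})$ whose diagonal subgroup $A=G\cap\mathrm{D}(p,\mathbb{F})$ is not contained in the group of scalar matrices. Suppose that $w\in\mathrm{GL}(p,\mathbb{F})$ satisfies $w^{-1}Gw\le\widetilde{\mathrm{M}}(p,\mathbb{F})$ and $w^{-1}Aw\le \mathrm{D}(p,\mathbb{F})$. Then $w$ is monomial; furthermore, if $\mathbb{F}$ is algebraically closed, then some scalar multiple of $w$ lies in $\widetilde{\mathrm{M}}(p,\mathbb{F})$.
   Context: $\mathrm{D}(p,\mathbb{F})$ is the group of invertible diagonal $p\times p$ matrices over $\mathbb{F}$. $\widetilde{\mathrm{M}}(p,\mathbb{F})$ denotes the group of all $p\times p$ monomial matrices whose non-zero entries are roots of unity in $\mathbb{F}$. *)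

From mathcomp Require Import all_boot all_order all_algebra all_fingroup.
Set Implicit Arguments. Unset Strict Implicit. Unset Printing Implicit Defensive.
Import GRing.Theory.
Local Open Scope ring_scope.

Section Defs.
Variables (F : fieldType) (n : nat).

Definition root_of_unity (x : F) : Prop := exists k : nat, (0 < k)%N /\ x ^+ k = 1.

Definition monomial_mx (A : 'M[F]_n) : Prop :=
  exists s : 'S_n, forall i j, A i j != 0 <-> j = s i.

Definition Mtilde (A : 'M[F]_n) : Prop :=
  monomial_mx A /\ forall i j, A i j != 0 -> root_of_unity (A i j).

Definition diagD (A : 'M[F]_n) : Prop := is_diag_mx A /\ A \in unitmx.

Definition scalarZ (A : 'M[F]_n) : Prop := exists c : F, c != 0 /\ A = c%:M.

Definition is_subgroup_GL (G : 'M[F]_n -> Prop) : Prop :=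
  G 1%:M /\ (forall g, G g -> g \in unitmx) /\
  (forall g h, G g -> G h -> G (g *m h)) /\ (forall g, G g -> G (invmx g)).

Definition irreducible_mxgroup (G : 'M[F]_n -> Prop) : Prop :=
  (0 < n)%N /\
  forall U : 'M[F]_n, (forall g, G g -> stablemx U g) ->
    \rank U = 0%N \/ \rank U = n.
End Defs.

(* Call coordinates i and k equivalent when every diagonal element of G has
   equal i-th and k-th diagonal entries.  Conjugating a diagonal element by a
   monomial element of G permutes its diagonal, and an irreducible monomial group
   is transitive on coordinates, so G permutes the equivalence classes
   transitively: they all have the same size, which divides the prime p.  A
   non-scalar diagonal element rules out a single class, so the relation is
   equality.  If a and w^-1 a w = d are diagonal then a w = w d, so two nonzero
   entries w i j and w k j in one column give a i i = d j j = a k k for all such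
   a, whence i = k and w is monomial.  Finally, for g in G with g i0 i <> 0,
   comparing g w with w (w^-1 g w) at (i0, s i) writes w i (s i) / w i0 (s i0)
   as a quotient of nonzero entries of two matrices of Mtilde, a root of unity. *)

From Pilot Require Import Defs.
From mathcomp Require Import all_boot all_order all_algebra all_fingroup.
From mathcomp Require Import boolp.
Set Implicit Arguments. Unset Strict Implicit. Unset Printing Implicit Defensive.
Local Open Scope ring_scope.

Section UniformPartition.
Variables (T : finType) (e : rel T).
Hypothesis e_equiv : equivalence_rel e.

Lemma prime_uniform_equivalence :
  prime #|T| -> (forall x y, #|[set z | e x z]| = #|[set z | e y z]|) ->
  (forall x y, e x y -> x = y) \/ (forall x y, e x y).
Proof.
move=> T_prime class_card.
have e_equivT : {in [set: T] & &, equivalence_rel e} by move=> x y z _ _ _.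
have class_setT x : [set y in [set: T] | e x y] = [set y | e x y].
  by apply/setP => y; rewrite !inE.
case: (pickP T) => [x0 _|T0]; last by left => x; have := T0 x.
pose P := equivalence_partition e [set: T].
have P_uniform : {in P, forall B : {set T}, #|B| = #|[set z | e x0 z]|}.
  by move=> _ /imsetP[x _ ->]; rewrite class_setT.
have := card_uniform_partition P_uniform (equivalence_partitionP e_equivT).
rewrite cardsT => card_T.
have /(primeP T_prime).2 : (#|[set z | e x0 z]| %| #|T|)%N.
  by rewrite card_T dvdn_mull.
case/orP => /eqP class_size.
- left => x y exy.
  have /cards1P[z class_x] : #|[set z | e x z]| == 1%N.
    by rewrite (class_card x x0) class_size.
  have : x \in [set z | e x z] by rewrite inE (e_equiv x x x).1.
  have : y \in [set z | e x z] by rewrite inE.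
  by rewrite class_x !inE => /eqP -> /eqP ->.
- right => x y; suff class_x : [set z | e x z] = [set: T].
    by have := in_setT y; rewrite -class_x inE.
  by apply/eqP; rewrite eqEcard subsetT cardsT (class_card x x0) class_size leqnn.
Qed.

End UniformPartition.

Section MonomialMatrices.
Variables (F : fieldType) (n : nat).
Import GRing.Theory.
Implicit Types (A B a g w : 'M[F]_n) (s t : 'S_n).

Lemma is_diag_mxE A : is_diag_mx A -> A = diag_mx (\row_i A i i).
Proof.
move=> /is_diag_mxP A_diag; apply/matrixP => i j; rewrite !mxE.
by case: eqVneq => [-> | /A_diag ->]; rewrite ?mulr1n ?mulr0n.
Qed.

Lemma diagD_neq0 A i : diagD A -> A i i != 0.
Proof.
case=> /is_diag_mxE A_diag; rewrite unitmxE {1}A_diag det_diag unitfE.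
by move=> /prodf_neq0 /(_ i isT); rewrite mxE.
Qed.

Lemma unitmx_row_neq0 A i : A \in unitmx -> exists j, A i j != 0.
Proof.
move=> A_unit; apply/existsP; apply: contraT; rewrite negb_exists => /forallP row0.
have := congr1 (fun M : 'M[F]_n => M i i) (mulmxV A_unit).
rewrite !mxE eqxx big1 => [/esym/eqP|j _]; first by rewrite oner_eq0.
by have := row0 j; rewrite negbK => /eqP ->; rewrite mul0r.
Qed.

Definition monomial_by s A : Prop := forall i j, A i j != 0 <-> j = s i.

Lemma monomial_by_neq0 s A i : monomial_by s A -> A i (s i) != 0.
Proof. by move=> As; apply/As. Qed.

Lemma monomial_by_eq0 s A i j : monomial_by s A -> j != s i -> A i j = 0.
Proof. by move=> As; apply: contraNeq => /As ->. Qed.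

Lemma mul_monomial_by_mx s A :
  monomial_by s A -> forall B i j, (A *m B) i j = A i (s i) * B (s i) j.
Proof.
move=> As B i j; rewrite mxE (bigD1 (s i)) //= big1 ?addr0 // => k k_si.
by rewrite (monomial_by_eq0 As k_si) mul0r.
Qed.

Lemma monomial_by_mul_diag s A d :
  monomial_by s A -> A *m diag_mx d = diag_mx (\row_i d 0 (s i)) *m A.
Proof.
move=> As; apply/matrixP => i j; rewrite mul_diag_mx mul_mx_diag !mxE.
case: (eqVneq j (s i)) => [-> | /(monomial_by_eq0 As) ->]; first exact: mulrC.
by rewrite mulr0 mul0r.
Qed.

Lemma monomial_by_conj_diag s A d : monomial_by s A -> A \in unitmx ->
  A *m diag_mx d *m invmx A = diag_mx (\row_i d 0 (s i)).
Proof. by move=> As A_unit; rewrite (monomial_by_mul_diag d As) mulmxK. Qed.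

Lemma unitmx_monomial w : w \in unitmx ->
  (forall i k j, w i j != 0 -> w k j != 0 -> i = k) -> monomial_mx w.
Proof.
move=> w_unit col_inj; pose f i := xchoose (unitmx_row_neq0 i w_unit).
have f_neq0 i : w i (f i) != 0 := xchooseP (unitmx_row_neq0 i w_unit).
have f_inj : injective f.
  by move=> i k fik; apply: (col_inj i k (f i)); rewrite // fik.
exists (perm f_inj) => i j; split => [wij | ->]; last by rewrite permE.
have := f_neq0 ((perm f_inj)^-1 j)%g; rewrite -[f _]permE permKV => w_j.
by rewrite (col_inj _ _ _ wij w_j) permKV.
Qed.

Lemma diag_conj_entry a w i j : w \in unitmx -> is_diag_mx a ->
  is_diag_mx (invmx w *m a *m w) -> w i j != 0 ->
  a i i = (invmx w *m a *m w) j j.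
Proof.
move=> w_unit /is_diag_mxE a_diag /is_diag_mxE d_diag wij.
set d := invmx w *m a *m w in d_diag *.
have /matrixP/(_ i j) : a *m w = w *m d by rewrite /d !mulmxA mulmxV ?mul1mx.
rewrite {1}a_diag {1}d_diag mul_diag_mx mul_mx_diag !mxE mulrC.
exact: (mulfI wij).
Qed.

Lemma monomial_conj_entry g w s t i0 i : w \in unitmx ->
  monomial_by t g -> monomial_by s w -> g i0 i != 0 ->
  g i0 i * w i (s i) = w i0 (s i0) * (invmx w *m g *m w) (s i0) (s i).
Proof.
move=> w_unit gt ws g_i0i; rewrite -(mul_monomial_by_mx ws).
rewrite !mulmxA mulmxV ?mul1mx // (mul_monomial_by_mx gt).
by rewrite -((gt i0 i).1 g_i0i).
Qed.

End MonomialMatrices.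

Section RootsOfUnity.
Variable F : fieldType.
Implicit Types x y : F.
Import GRing.Theory.

(* MathComp also exports a [root_of_unity] (in poly) and, with GRing.Theory,
   a [scalarZ]; the [Defs.] qualifier selects the definitions of the statement. *)

Lemma root_of_unityM x y :
  Defs.root_of_unity x -> Defs.root_of_unity y -> Defs.root_of_unity (x * y).
Proof.
case=> k [k_gt0 xk] [l [l_gt0 yl]]; exists (k * l)%N.
split; first by rewrite muln_gt0 k_gt0.
by rewrite exprMn exprM xk expr1n mulnC exprM yl expr1n mulr1.
Qed.

Lemma root_of_unityV x :
  Defs.root_of_unity x -> Defs.root_of_unity x^-1.
Proof. by case=> k [k_gt0 xk]; exists k; rewrite exprVn xk invr1. Qed.

End RootsOfUnity.

Definition diag_coincide (F : fieldType) (n : nat) (G : 'M[F]_n -> Prop) (i k : 'I_n) :=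
  forall a, G a -> diagD a -> a i i = a k k.

Section MonomialGroups.
Variables (F : fieldType) (n : nat) (G : 'M[F]_n -> Prop).
Hypotheses (G_sub : is_subgroup_GL G) (G_mono : forall g, G g -> monomial_mx g).
Import GRing.Theory.

Lemma monomial_group_transitive :
  irreducible_mxgroup G -> forall i j, exists2 g, G g & g i j != 0.
Proof.
have [G1 [_ [GM _]]] := G_sub; move=> [_ G_irr] i j.
pose O := [set k | `[< exists2 g, G g & g i k != 0 >]].
have O_i : i \in O.
  by rewrite inE; apply/asboolP; exists 1%:M; rewrite // mxE eqxx oner_eq0.
have O_closed g a b : G g -> a \in O -> g a b != 0 -> b \in O.
  move=> Gg; rewrite !inE => /asboolP[h Gh hia] gab; apply/asboolP.
  have [t ht] := G_mono Gh; exists (h *m g); first exact: GM.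
  by rewrite (mul_monomial_by_mx ht) -((ht i a).1 hia) mulf_neq0.
pose U : 'M[F]_n := diag_mx (\row_k (k \in O)%:R).
have U_stable g : G g -> stablemx U g.
  move=> Gg; suff <- : U *m g *m U = U *m g by exact: submxMl.
  apply/matrixP => a b; rewrite mul_mx_diag mul_diag_mx !mxE.
  case: (eqVneq (g a b) 0) => [-> | gab]; first by rewrite !(mulr0, mul0r).
  by case O_a: (a \in O); rewrite ?mul0r // (O_closed g a b Gg O_a gab) mulr1.
case: (G_irr U U_stable) => [/eqP | rank_U].
  rewrite mxrank_eq0 => /eqP/matrixP/(_ i i).
  by rewrite !mxE eqxx O_i mulr1n => /eqP; rewrite oner_eq0.
have U_unit : U \in unitmx by rewrite -row_free_unit /row_free rank_U.
have := diagD_neq0 j (conj (diag_mx_is_diag _) U_unit).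
rewrite !mxE eqxx mulr1n inE.
by case: asboolP => [// | _]; rewrite eqxx.
Qed.

Lemma diag_coincide_perm g s i k : G g -> monomial_by s g ->
  diag_coincide G i k -> diag_coincide G (s i) (s k).
Proof.
have [_ [G_unit [GM GV]]] := G_sub; move=> Gg gs ik a Ga Da.
pose b := g *m a *m invmx g.
have Gb : G b by apply: (GM); [apply: GM | apply: GV].
have b_diag : b = diag_mx (\row_x a (s x) (s x)).
  rewrite /b {1}(is_diag_mxE Da.1) (monomial_by_conj_diag _ gs (G_unit g Gg)).
  by congr diag_mx; apply/rowP => x; rewrite !mxE.
have Db : diagD b by split; [rewrite b_diag diag_mx_is_diag | exact: G_unit].
by have := ik b Gb Db; rewrite b_diag !mxE !eqxx !mulr1n.
Qed.

Lemma diag_coincide_class_card : irreducible_mxgroup G -> forall x y,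
  #|[set z | `[< diag_coincide G x z >]]| = #|[set z | `[< diag_coincide G y z >]]|.
Proof.
move=> G_irr.
suff card_le x y : (#|[set z | `[< diag_coincide G x z >]]|
                    <= #|[set z | `[< diag_coincide G y z >]]|)%N.
  by move=> x y; apply/eqP; rewrite eqn_leq !card_le.
have [g Gg gxy] := monomial_group_transitive G_irr x y.
have [s gs] := G_mono Gg; rewrite ((gs x y).1 gxy).
rewrite -(card_imset _ (@perm_inj _ s)); apply/subset_leq_card/subsetP.
move=> _ /imsetP[z xz ->]; move: xz; rewrite !inE => /asboolP xz.
by apply/asboolP; exact: diag_coincide_perm Gg gs xz.
Qed.

Lemma diag_coincide_eq i k : prime n -> irreducible_mxgroup G ->
  (exists a, G a /\ diagD a /\ ~ Defs.scalarZ a) -> diag_coincide G i k -> i = k.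
Proof.
move=> n_prime G_irr [a [Ga [Da a_nscalar]]] ik.
have coincide_equiv : equivalence_rel (fun x y => `[< diag_coincide G x y >]).
  move=> x y z; split; first by apply/asboolP.
  move=> /asboolP xy; apply/asboolP/asboolP => [xz | yz] b Gb Db.
    by rewrite -(xy b Gb Db) xz.
  by rewrite (xy b Gb Db) yz.
have card_prime : prime #|'I_n| by rewrite card_ord.
have [trivial | total] := prime_uniform_equivalence coincide_equiv card_prime
  (diag_coincide_class_card G_irr).
  by apply: trivial; apply/asboolP.
case: a_nscalar; exists (a i i); split; first exact: diagD_neq0.
rewrite {1}(is_diag_mxE Da.1); apply/matrixP => x y; rewrite !mxE.
by have /asboolP -> := total x i.
Qed.

Lemma Mtilde_normalize w s i0 : (forall g, G g -> Mtilde g) ->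
  irreducible_mxgroup G -> w \in unitmx -> monomial_by s w ->
  (forall g, G g -> Mtilde (invmx w *m g *m w)) ->
  Mtilde ((w i0 (s i0))^-1 *: w).
Proof.
move=> G_Mtilde G_irr w_unit ws w_conj.
have w_i0 := monomial_by_neq0 i0 ws.
have cws : monomial_by s ((w i0 (s i0))^-1 *: w).
  by move=> i j; rewrite mxE mulf_eq0 negb_or invr_eq0 w_i0; exact: ws.
split=> [|i j /cws ->]; first by exists s.
have [g Gg g_i0i] := monomial_group_transitive G_irr i0 i.
have [[t gt] g_roots] := G_Mtilde g Gg.
have [_ h_roots] := w_conj g Gg.
have conj_entry := monomial_conj_entry w_unit gt ws g_i0i.
set h := (invmx w *m g *m w) (s i0) (s i) in conj_entry.
have h_neq0 : h != 0.
  move: (mulf_neq0 g_i0i (monomial_by_neq0 i ws)).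
  by rewrite conj_entry mulf_eq0 negb_or => /andP[].
have -> : ((w i0 (s i0))^-1 *: w) i (s i) = h * (g i0 i)^-1.
  rewrite mxE; apply: (mulfI g_i0i); rewrite mulrCA conj_entry.
  by rewrite mulKf // mulrC divfK.
exact: root_of_unityM (h_roots _ _ h_neq0) (root_of_unityV (g_roots _ _ g_i0i)).
Qed.

End MonomialGroups.

Theorem theorem2p10 (F : fieldType) (p : nat) (G : 'M[F]_p -> Prop) (w : 'M[F]_p) :
  prime p ->
  is_subgroup_GL G ->
  (forall g, G g -> Mtilde g) ->
  irreducible_mxgroup G ->
  (exists a, G a /\ diagD a /\ ~ scalarZ a) ->
  w \in unitmx ->
  (forall g, G g -> Mtilde (invmx w *m g *m w)) ->
  (forall a, G a -> diagD a -> diagD (invmx w *m a *m w)) ->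
  monomial_mx w /\
  (GRing.closed_field_axiom F -> exists c : F, Mtilde (c *: w)).
Proof.
move=> p_prime G_sub G_Mtilde G_irr G_nscalar w_unit w_conjM w_conjD.
have G_mono g : G g -> monomial_mx g by case/G_Mtilde.
have w_mono : monomial_mx w.
  apply: (unitmx_monomial w_unit) => i k j wij wkj.
  apply: (diag_coincide_eq G_sub G_mono p_prime G_irr G_nscalar) => a Ga Da.
  have [d_diag _] := w_conjD a Ga Da.
  by rewrite (diag_conj_entry w_unit Da.1 d_diag wij)
             (diag_conj_entry w_unit Da.1 d_diag wkj).
split=> // _; have [s ws] := w_mono.
pose i0 := Ordinal (prime_gt0 p_prime).
by exists (w i0 (s i0))^-1; apply: (Mtilde_normalize G_sub G_mono).
Qed.
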